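(* Let $f:\mathbb{R}^n\to\mathbb{R}^n$ be smooth, $N\ge3$, and for each $i$ let $A_{i+1,i},A_{i-1,i}$ be real $n\times n$ matrices (indices modulo $N$; $A_{j,i}$ is the coupling from node $j$ to node $i$). Consider the bidirectional ring network $$\dot{x}_i=f(x_i)+A_{i+1,i}(x_{i+1}-x_i)+A_{i-1,i}(x_{i-1}-x_i),\qquad i=1,\dots,N.$$ Suppose there is $\lambda>0$ with $(J_f(z))_s\preceq-\lambda I$ for all $z\in\mathbb{R}^n$, and that for each $i=1,\dots,N$ at least one of the following holds: (1) $(A_{i+1,i})_s\succ0$ and $(A_{i,i+1})_s-\tfrac14(A_{i,i+1}+A_{i+1,i}^T)\,(A_{i+1,i})_s^{-1}\,(A_{i+1,i}+A_{i,i+1}^T)\succeq0$; (2) $(A_{i,i+1})_s\succ0$ and $(A_{i+1,i})_s-\tfrac14(A_{i+1,i}+A_{i,i+1}^T)\,(A_{i,i+1})_s^{-1}\,(A_{i,i+1}+A_{i+1,i}^T)\succeq0$. Then for every initial condition, $\|x_i(t)-x_j(t)\|\to0$ exponentially as $t\to\infty$ for all $i,j$ (complete synchronization).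
   Context: $J_f(z)=\frac{\partial f}{\partial z}(z)$ is the Jacobian of $f$. For a square matrix $M$, $M_s=\tfrac12(M+M^T)$ and $M_s^{-1}$ denotes $(M_s)^{-1}$. For symmetric matrices, $\succ0$ ($\succeq0$) means positive definite (semidefinite), and $M\preceq N$ means $N-M\succeq0$. *)

From HB Require Import structures.
From mathcomp Require Import all_boot all_order all_algebra.
From mathcomp Require Import all_classical all_reals all_analysis.
Set Implicit Arguments. Unset Strict Implicit. Unset Printing Implicit Defensive.
Import Order.TTheory GRing.Theory Num.Theory.
Import numFieldNormedType.Exports.
Local Open Scope ring_scope.

Section Defs.
Variable R : realType.

Fixpoint iterD m p (vs : seq 'rV[R]_m) (f : 'rV[R]_m -> 'rV[R]_p) : 'rV[R]_m -> 'rV[R]_p :=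
  match vs with
  | [::] => f
  | v :: vs' => 'D_v (iterD vs' f)
  end.

Definition smooth m p (f : 'rV[R]_m -> 'rV[R]_p) : Prop :=
  forall vs : seq 'rV[R]_m,
    continuous (iterD vs f) /\ (forall (v x : 'rV[R]_m), derivable (iterD vs f) x v).

(* Jacobian in the usual (column) convention: (J_f z) i j = d f_i / d z_j.
   The library's [jacobian] acts on row vectors ('D_v f z = v *m jacobian f z),
   so it is the transpose. *)
Definition Jf n (f : 'rV[R]_n -> 'rV[R]_n) (z : 'rV[R]_n) : 'M[R]_n :=
  (jacobian f z)^T.

Definition symp n (M : 'M[R]_n) : 'M[R]_n := 2^-1 *: (M + M^T).

Definition qform n (M : 'M[R]_n) (v : 'rV[R]_n) : R := (v *m M *m v^T) 0 0.

Definition psd n (M : 'M[R]_n) : Prop := forall v : 'rV[R]_n, 0 <= qform M v.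
Definition pd n (M : 'M[R]_n) : Prop := forall v : 'rV[R]_n, v != 0 -> 0 < qform M v.

Definition loewner_le n (M N : 'M[R]_n) : Prop := psd (N - M).

End Defs.

(* Let [m t] be the mean of the node states and [V t = \sum_i |x_i t - m t|^2]
   the disagreement.  The Jacobian bound makes [f] contracting,
   [<u - v, f u - f v> <= - lambda |u - v|^2], so the intrinsic dynamics
   contribute at most [-2 lambda V] to [V']; the contribution of [f (m t)]
   cancels because the deviations sum to zero.  Summing the coupling terms
   edge by edge, the edge [(i, i+1)] contributes minus a quadratic form in
   the pair of deviations whose matrix is the block matrix with diagonal
   blocks [(A_{i+1,i})_s], [(A_{i,i+1})_s]; either condition of the theorem
   says that one diagonal block is positive definite and its Schur complement
   is positive semidefinite, so this form is nonnegative.  Hence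
   [V' <= -2 lambda V], [V] decays like [exp (-2 lambda t)], and so does every
   [|x_i - x_j|^2]. *)
From HB Require Import structures.
From mathcomp Require Import all_boot all_order all_algebra.
From mathcomp Require Import all_classical all_reals all_analysis.
From mathcomp Require Import lra.
Set Implicit Arguments.
Unset Strict Implicit.
Unset Printing Implicit Defensive.
Import Order.TTheory GRing.Theory Num.Theory.
Import numFieldNormedType.Exports.
Local Open Scope classical_set_scope.
Local Open Scope ring_scope.

Section MatrixNorm.
Variable R : realDomainType.

Lemma mx_normr_le m p (M : 'M[R]_(m, p)) (b : R) :
  0 <= b -> (forall i j, `|M i j| <= b) -> `|M| <= b.
Proof.
move=> b0 Mb; rewrite [leLHS]/Num.Def.normr /= mx_normrE.
by apply: bigmax_le => // -[i j] _; apply: Mb.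
Qed.

Lemma mx_normr_entry m p (M : 'M[R]_(m, p)) i j : `|M i j| <= `|M|.
Proof.
rewrite [leRHS]/Num.Def.normr /= mx_normrE.
exact: (le_bigmax _ _ (i, j)).
Qed.

End MatrixNorm.

Lemma continuous_sum (K : numFieldType) (T : topologicalType)
    (V : normedModType K) k (F : 'I_k -> T -> V) (t : T) :
  (forall i, {for t, continuous (F i)}) -> {for t, continuous (fun s => \sum_i F i s)}.
Proof.
move=> Fc.
have -> : (fun s => \sum_i F i s) = \sum_i F i by apply/funext => s; rewrite fct_sumE.
elim/big_ind: _ => //; first exact: cst_continuous.
by move=> g1 g2 g1c g2c; apply: continuousD.
Qed.

Lemma mulmxr_continuous (K : numFieldType) m p (J : 'M[K]_(m, p)) :
  continuous (fun h : 'rV[K]_m => h *m J).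
Proof.
move=> h.
have -> : (fun h : 'rV[K]_m => h *m J) = (fun h => \sum_k h 0 k *: row k J).
  by apply/funext => h'; rewrite mulmx_sum_row.
apply: (@continuous_sum K _ _ m (fun k (h' : 'rV[K]_m) => h' 0 k *: row k J)) => k.
exact: continuous_comp (@coord_continuous K 1 m 0 k h) (@scalel_continuous K _ (row k J) _).
Qed.

Section DirectionalCalculus.
Variable R : realType.

Lemma is_derive_along_line m p (g : 'rV[R]_m -> 'rV[R]_p) (y w : 'rV[R]_m) (s : R) :
  derivable g (y + s *: w) w ->
  is_derive s 1 (fun t : R => g (y + t *: w)) ('D_w g (y + s *: w)).
Proof.
move=> dg.
have E : (fun h : R => h^-1 *: (((fun t : R => g (y + t *: w)) \o shift s) (h *: 1)
                                 - g (y + s *: w)))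
  = (fun h : R => h^-1 *: ((g \o shift (y + s *: w)) (h *: w) - g (y + s *: w))).
  apply/funext => h /=; congr (_ *: (g _ - _)).
  by rewrite /shift /= [_%:A]mulr1 scalerDl addrCA.
by split; rewrite /derivable /derive E.
Qed.

Lemma is_derive_mx_entry q p (F : R -> 'M[R]_(q, p)) (s : R) (dF : 'M[R]_(q, p)) i j :
  is_derive s 1 F dF -> is_derive s 1 (fun t => F t i j) (dF i j).
Proof.
case=> dF_ex <-; split; first exact: ((derivable_mxP _ _ _).1 dF_ex i j).
by rewrite (derive_mx dF_ex) mxE.
Qed.

Lemma MVT_from0 (G dG : R -> R) (a : R) :
  (forall t : R, is_derive t 1 G (dG t)) ->
  exists2 c, `|c| <= `|a| & G a - G 0 = dG c * a.
Proof.
move=> dG_ok.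
have Gc (i : interval R) : {within [set` i], continuous G}.
  by apply: derivable_within_continuous => t _; case: (dG_ok t).
have [a0|a0] := leP 0 a.
  have [c c0a E] := MVT_segment a0 (fun t _ => dG_ok t) (Gc _).
  exists c; last by rewrite E subr0.
  move: c0a; rewrite in_itv /= => /andP[c0 ca].
  by rewrite !ger0_norm // (le_trans c0 ca).
have [c ca0 E] := MVT_segment (ltW a0) (fun t _ => dG_ok t) (Gc _).
exists c; last by rewrite -opprB E sub0r mulrN opprK.
move: ca0; rewrite in_itv /= => /andP[ac c0].
by rewrite !ler0_norm ?lerN2 // ltW.
Qed.

(* The mean value theorem, applied entrywise with a possibly different
   intermediate point for each entry. *)
Lemma increment_along_le m p (g : 'rV[R]_m -> 'rV[R]_p) (y w : 'rV[R]_m)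
    (dg : 'rV[R]_p) (a eps : R) :
  (forall t : R, derivable g (y + t *: w) w) ->
  (forall c, `|c| <= `|a| -> `|dg - 'D_w g (y + c *: w)| <= eps) ->
  `|g (y + a *: w) - g y - a *: dg| <= `|a| * eps.
Proof.
move=> g_der close.
have eps0 : 0 <= eps by apply: le_trans (close 0 _); rewrite ?normr0.
apply: mx_normr_le => [|i j]; first by rewrite mulr_ge0.
rewrite [i]ord1.
have [c ca E] := MVT_from0 a (fun t => is_derive_mx_entry 0 j
                                 (is_derive_along_line (g_der t))).
rewrite scale0r addr0 in E.
rewrite !mxE E mulrC -mulrBr normrM ler_wpM2l // distrC.
by apply: le_trans (close c ca); have := mx_normr_entry (dg - 'D_w g (y + c *: w)) 0 j;
  rewrite !mxE.
Qed.

End DirectionalCalculus.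

Section ContinuousPartials.
Variables (R : realType) (m : nat).

Definition row_prefix (k : nat) (h : 'rV[R]_m) : 'rV[R]_m :=
  \row_j (if (j < k)%N then h 0 j else 0).

Lemma row_prefix0 h : row_prefix 0 h = 0.
Proof. by apply/rowP => j; rewrite !mxE. Qed.

Lemma row_prefix_full h : row_prefix m h = h.
Proof. by apply/rowP => j; rewrite !mxE ltn_ord. Qed.

Lemma row_prefixS (k : 'I_m) (h : 'rV[R]_m) :
  row_prefix k.+1 h = row_prefix k h + h 0 k *: delta_mx 0 k.
Proof.
apply/rowP => j; rewrite !mxE ltnS leq_eqVlt.
have [->|jk] := eqVneq j k; first by rewrite eqxx ltnn /= mulr1 add0r.
by rewrite val_eqE (negbTE jk) /= mulr0 addr0.
Qed.

Lemma normr_row_prefix_step (k : 'I_m) (h : 'rV[R]_m) (c : R) :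
  `|c| <= `|h 0 k| -> `|row_prefix k h + c *: delta_mx 0 k| <= `|h|.
Proof.
move=> ck; apply: mx_normr_le => // i j; rewrite [i]ord1 !mxE.
have [jk|kj] := ltnP j k.
  have -> : (j == k) = false by rewrite -val_eqE /= ltn_eqF.
  by rewrite mulr0 addr0 mx_normr_entry.
rewrite add0r; case: (j == k); rewrite /= ?mulr1 ?mulr0 ?normr0 //.
exact: le_trans ck (mx_normr_entry _ _ _).
Qed.

Variables (p : nat) (g : 'rV[R]_m -> 'rV[R]_p).
Hypothesis g_derivable : forall x v, derivable g x v.
Hypothesis g_partials_continuous : forall v, continuous ('D_v g).

Definition partials z : 'M[R]_(m, p) := \matrix_k 'D_(delta_mx 0 k) g z.

(* Walk from [z] to [z + h] one coordinate at a time. *)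
Lemma linearization_error_le z h (eps : R) :
  (forall y, `|y - z| <= `|h| -> forall k : 'I_m,
     `|'D_(delta_mx 0 k) g z - 'D_(delta_mx 0 k) g y| <= eps) ->
  `|g (z + h) - g z - h *m partials z| <= m%:R * (`|h| * eps).
Proof.
move=> close; pose P k := z + row_prefix k h.
have telescope : g (P m) - g (P 0%N) = \sum_(k < m) (g (P k.+1) - g (P k)).
  by rewrite -(telescope_sumr (fun k => g (P k)) (leq0n m)) big_mkord.
have hJ : h *m partials z = \sum_(k < m) h 0 k *: 'D_(delta_mx 0 k) g z.
  by rewrite mulmx_sum_row; apply: eq_bigr => k _; rewrite rowK.
have -> : g (z + h) - g z = g (P m) - g (P 0%N).
  by rewrite /P row_prefix_full row_prefix0 addr0.
rewrite telescope hJ -sumrB; apply: le_trans (ler_norm_sum _ _ _) _.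
apply: (@le_trans _ _ (\sum_(k < m) `|h| * eps)).
  apply: ler_sum => k _.
  rewrite /P row_prefixS addrA.
  apply: le_trans (increment_along_le _ _) _ => [t|c ck|].
  - exact: g_derivable.
  - by apply: close; rewrite addrAC (addrAC z) subrr add0r normr_row_prefix_step.
  - apply: ler_wpM2r; last exact: mx_normr_entry.
    by apply: le_trans (close z _ k) => //; rewrite subrr normr0.
by rewrite sumr_const card_ord mulr_natl.
Qed.

Lemma differentiable_of_continuous_partials z : differentiable g z.
Proof.
pose dg : {linear 'rV[R]_m -> 'rV[R]_p} := mulmxr (partials z).
suff lin : g \o shift z = cst (g z) + dg +o_ 0 id.
  have dg_cont : continuous dg by exact: mulmxr_continuous.
  by apply/diff_locallyP; rewrite (diff_unique dg_cont lin).
apply/eqaddoP => eps eps0.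
pose eps' := eps / (m%:R + 1).
have eps'0 : 0 < eps' by rewrite divr_gt0 // ltr_wpDl.
have : \forall y \near z, forall k : 'I_m,
    `|'D_(delta_mx 0 k) g z - 'D_(delta_mx 0 k) g y| <= eps'.
  eapply filter_forall; last first.
    move=> k.
    exact: (cvgrPdist_le _ _).1 (@g_partials_continuous (delta_mx 0 k) z) eps' eps'0.
  exact: nbhs_filter.
move=> /nbhs_ballP[d /= d0 near_z].
apply/nbhs_ballP; exists d => // h; rewrite -ball_normE /= sub0r normrN => hd.
have -> : (g \o shift z - (cst (g z) + dg)) h
          = g (h + z) - (g z + h *m partials z) by [].
rewrite (addrC h) opprD addrA.
apply: le_trans (linearization_error_le (eps := eps') _) _.
  move=> y yz; apply: near_z; rewrite -ball_normE /= distrC.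
  exact: le_lt_trans yz hd.
rewrite mulrCA mulrC ler_wpM2r // /eps' mulrCA ger_pMr // ler_pdivrMr ?ltr_wpDl //.
by rewrite mul1r lerDl.
Qed.

End ContinuousPartials.

Section QuadraticForms.
Variable R : realType.

Definition dot m (u v : 'rV[R]_m) : R := \sum_j u 0 j * v 0 j.

Definition bil m (M : 'M[R]_m) (a b : 'rV[R]_m) : R := (a *m M *m b^T) 0 0.

Lemma dotC m (u v : 'rV[R]_m) : dot u v = dot v u.
Proof. by apply: eq_bigr => j _; rewrite mulrC. Qed.

Lemma dotDr m (d a b : 'rV[R]_m) : dot d (a + b) = dot d a + dot d b.
Proof. by rewrite /dot -big_split; apply: eq_bigr => j _; rewrite !mxE mulrDr. Qed.

Lemma dotBr m (d a b : 'rV[R]_m) : dot d (a - b) = dot d a - dot d b.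
Proof. by rewrite /dot -sumrB; apply: eq_bigr => j _; rewrite !mxE mulrBr. Qed.

Lemma dot_suml m k (a : 'I_k -> 'rV[R]_m) b : \sum_i dot (a i) b = dot (\sum_i a i) b.
Proof. by rewrite /dot exchange_big; apply: eq_bigr => j _; rewrite summxE mulr_suml. Qed.

Lemma dot0l m (b : 'rV[R]_m) : dot 0 b = 0.
Proof. by rewrite /dot big1 // => j _; rewrite mxE mul0r. Qed.

Lemma dot_ge0 m (a : 'rV[R]_m) : 0 <= dot a a.
Proof. by apply: sumr_ge0 => j _; rewrite -expr2 sqr_ge0. Qed.

Lemma normr_le_sqrt_dot m (a : 'rV[R]_m) : `|a| <= Num.sqrt (dot a a).
Proof.
apply: mx_normr_le => // i j; rewrite [i]ord1 -sqrtr_sqr ler_wsqrtr //.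
rewrite /dot (bigD1 j) //= expr2 lerDl.
by apply: sumr_ge0 => k _; rewrite -expr2 sqr_ge0.
Qed.

Lemma dot_mulmx_tr m (a b : 'rV[R]_m) (M : 'M[R]_m) : dot a (b *m M^T) = bil M a b.
Proof.
rewrite /bil -mulmxA -[M]trmxK -trmx_mul trmxK /dot [RHS]mxE.
by apply: eq_bigr => j _; rewrite [_^T _ _]mxE.
Qed.

Lemma qform_bil m (M : 'M[R]_m) v : qform M v = bil M v v.
Proof. by []. Qed.

Lemma bil_dot m (M : 'M[R]_m) a b : bil M a b = dot (a *m M) b.
Proof. by rewrite /bil /dot [LHS]mxE; apply: eq_bigr => j _; rewrite [b^T _ _]mxE. Qed.

Lemma bil_tr m (M : 'M[R]_m) a b : bil M^T a b = bil M b a.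
Proof.
rewrite /bil; have -> : (a *m M^T *m b^T) 0 0 = (a *m M^T *m b^T)^T 0 0.
  by rewrite [RHS]mxE.
by rewrite !trmx_mul !trmxK mulmxA.
Qed.

Lemma bilD m (M N : 'M[R]_m) a b : bil (M + N) a b = bil M a b + bil N a b.
Proof. by rewrite /bil mulmxDr mulmxDl mxE. Qed.

Lemma bilN m (M : 'M[R]_m) a b : bil (- M) a b = - bil M a b.
Proof. by rewrite /bil mulmxN mulNmx mxE. Qed.

Lemma bilZ m (c : R) (M : 'M[R]_m) a b : bil (c *: M) a b = c * bil M a b.
Proof. by rewrite /bil -scalemxAr -scalemxAl mxE. Qed.

Lemma bilDl m (M : 'M[R]_m) a1 a2 b : bil M (a1 + a2) b = bil M a1 b + bil M a2 b.
Proof. by rewrite /bil !mulmxDl mxE. Qed.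

Lemma bilDr m (M : 'M[R]_m) a b1 b2 : bil M a (b1 + b2) = bil M a b1 + bil M a b2.
Proof. by rewrite /bil linearD /= mulmxDr mxE. Qed.

Lemma bilZl m (M : 'M[R]_m) c a b : bil M (c *: a) b = c * bil M a b.
Proof. by rewrite /bil -!scalemxAl mxE. Qed.

Lemma bilZr m (M : 'M[R]_m) c a b : bil M a (c *: b) = c * bil M a b.
Proof. by rewrite /bil linearZ /= -scalemxAr mxE. Qed.

Lemma bilNl m (M : 'M[R]_m) a b : bil M (- a) b = - bil M a b.
Proof. by rewrite -scaleN1r bilZl mulN1r. Qed.

Lemma bilNr m (M : 'M[R]_m) a b : bil M a (- b) = - bil M a b.
Proof. by rewrite -scaleN1r bilZr mulN1r. Qed.

Lemma bil_mulmxl m (M N : 'M[R]_m) a b : bil M (a *m N) b = bil (N *m M) a b.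
Proof. by rewrite /bil !mulmxA. Qed.

Lemma bil_mulmxr m (M N : 'M[R]_m) a b : bil M a (b *m N) = bil (M *m N^T) a b.
Proof. by rewrite /bil trmx_mul !mulmxA. Qed.

Lemma bil_symp m (M : 'M[R]_m) v : bil (symp M) v v = bil M v v.
Proof.
by rewrite bilZ bilD bil_tr mulrDr !(mulrC 2^-1) -splitr.
Qed.

Lemma trmx_symp m (M : 'M[R]_m) : (symp M)^T = symp M.
Proof. by rewrite /symp linearZ /= linearD /= trmxK addrC. Qed.

Lemma pd_unitmx m (P : 'M[R]_m) : pd P -> P \in unitmx.
Proof.
move=> Ppd; rewrite unitmxE unitfE; apply/negP => /det0P[v v0 vP].
by have := Ppd v v0; rewrite /qform vP mul0mx mxE ltxx.
Qed.

(* The matrix [[X_s, C/2], [C^T/2, Y_s]] with [C = X + Y^T] is positive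
   semidefinite when [X_s] is positive definite and the Schur complement
   [Y_s - C^T X_s^-1 C / 4] is positive semidefinite. *)
Definition schur_psd m (X Y : 'M[R]_m) : Prop :=
  pd (symp X) /\
  psd (symp Y - 4^-1 *: (Y + X^T) *m invmx (symp X) *m (X + Y^T)).

Lemma schur_psd_qform_ge0 m (X Y : 'M[R]_m) u w : schur_psd X Y ->
  0 <= qform X u + qform Y w + bil (X + Y^T) u w.
Proof.
move=> [Xpd Spsd]; set P := symp X; set C := X + Y^T; set K := invmx P.
have Pu : P \in unitmx by exact: pd_unitmx.
have KT : K^T = K by rewrite /K trmx_inv trmx_symp.
have CT : Y + X^T = C^T by rewrite /C linearD /= trmxK addrC.
rewrite CT -/K in Spsd.
(* complete the square in [u] with the shift [t / 2] *)
pose t := w *m (C^T *m K).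
have Ptu : bil P t u = bil C u w.
  by rewrite -bil_tr trmx_symp /t bil_mulmxr trmx_mul KT trmxK mulmxA mulmxV ?mul1mx.
have Put : bil P u t = bil C u w by rewrite -Ptu -bil_tr trmx_symp.
have Ptt : bil P t t = bil (C^T *m K *m C) w w.
  rewrite /t bil_mulmxl bil_mulmxr trmx_mul KT trmxK.
  by rewrite -!mulmxA (mulmxA K P) mulVmx // mul1mx.
have square_ge0 : 0 <= qform P (u + 2^-1 *: t).
  have [->|nz] := eqVneq (u + 2^-1 *: t) 0; first by rewrite /qform !mul0mx mxE.
  exact: ltW (Xpd _ nz).
have := Spsd w; rewrite qform_bil bilD bilN bil_symp -!scalemxAl bilZ.
move: square_ge0; rewrite qform_bil !bilDl !bilDr !bilZl !bilZr Ptu Put Ptt bil_symp.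
by rewrite !qform_bil; lra.
Qed.

End QuadraticForms.

Section DotDerivatives.
Variables (R : realType) (p : nat) (F : R -> 'rV[R]_p) (t : R) (dF : 'rV[R]_p).
Hypothesis F_der : is_derive t 1 F dF.

Lemma is_derive_dotl (d : 'rV[R]_p) :
  is_derive t 1 (fun s => dot d (F s)) (dot d dF).
Proof.
have -> : (fun s => dot d (F s)) = \sum_j (fun s => d 0 j * F s 0 j).
  by apply/funext => s; rewrite /dot fct_sumE.
apply: is_derive_sum => j.
exact: is_deriveZ (is_derive_mx_entry 0 j F_der).
Qed.

Lemma is_derive_dot_self :
  is_derive t 1 (fun s => dot (F s) (F s)) (2 * dot (F t) dF).
Proof.
have -> : (fun s => dot (F s) (F s)) = \sum_j ((fun s => F s 0 j) * (fun s => F s 0 j)).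
  by apply/funext => s; rewrite /dot fct_sumE.
have -> : 2 * dot (F t) dF = \sum_j (F t 0 j *: dF 0 j + F t 0 j *: dF 0 j).
  by rewrite /dot mulr_sumr; apply: eq_bigr => j _; rewrite -mulr2n mulrC mulr_natr.
by apply: is_derive_sum => j; apply: is_deriveM; exact: is_derive_mx_entry.
Qed.

End DotDerivatives.

Section Contraction.
Variables (R : realType) (n : nat) (f : 'rV[R]_n -> 'rV[R]_n) (lam : R).
Hypothesis f_derivable : forall x v, derivable f x v.
Hypothesis f_partials_continuous : forall v, continuous ('D_v f).
Hypothesis Jf_le : forall z, loewner_le (symp (Jf f z)) (- lam *: 1%:M).

Lemma dot_derive_le y d : dot d ('D_d f y) <= - lam * dot d d.
Proof.
have := Jf_le y d; rewrite qform_bil bilD bilN bil_symp bilZ subr_ge0.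
rewrite /Jf bil_tr !bil_dot mulmx1 dotC -(deriveEjacobian _ _) //.
exact: differentiable_of_continuous_partials.
Qed.

Lemma contracting u v : dot (u - v) (f u - f v) <= - lam * dot (u - v) (u - v).
Proof.
set d := u - v; pose G t := dot d (f (v + t *: d)).
have [c _ E] := MVT_from0 (G := G) 1 (fun t =>
  is_derive_dotl (is_derive_along_line (@f_derivable (v + t *: d) d)) d).
have vdu : v + 1 *: d = u by rewrite scale1r /d addrC subrK.
rewrite /G vdu scale0r addr0 mulr1 -dotBr in E.
by rewrite E dot_derive_le.
Qed.

End Contraction.

Lemma exp_decay_of_derive_le (R : realType) (V dV : R -> R) (c : R) :
  {within `[0, +oo[, continuous V} ->
  (forall t : R, 0 < t -> is_derive t 1 V (dV t)) ->
  (forall t : R, 0 < t -> dV t <= - c * V t) ->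
  forall t : R, 0 <= t -> V t <= V 0 * expR (- c * t).
Proof.
move=> Vc V_der dV_le.
pose W t := V t * expR (c * t).
have exp_der (t : R) : is_derive t 1 (fun s => expR (c * s)) (expR (c * t) * c).
  have lin : is_derive t 1 (fun s : R => c * s) c.
    by have := @is_deriveZ _ _ _ id c t 1 1 (is_derive_id _ _); rewrite [_%:A]mulr1.
  exact: is_derive1_comp (is_derive_expR (c * t)) lin.
have W_der (t : R) : 0 < t ->
    is_derive t 1 W (V t *: (expR (c * t) * c) + expR (c * t) *: dV t).
  by move=> t0; exact: is_deriveM (V_der t t0) (exp_der t).
have W_nincr : forall s t : R, 0 <= s -> s <= t -> W t <= W s.
  apply: ler0_derive1_nincry => [t|t|].
  - by rewrite in_itv /= andbT => /W_der[].
  - rewrite in_itv /= andbT => t0; rewrite derive1E; case: (W_der t t0) => _ ->.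
    have := dV_le t t0; have := expR_gt0 (c * t).
    rewrite /GRing.scale /=; set E := expR _; nra.
  - move=> t; apply: cvgM; first exact: Vc.
    apply: (derivable_within_continuous (fun s _ => _)) => s _.
    by case: (exp_der s).
move=> t t0; have := W_nincr 0 t (lexx 0) t0; rewrite /W mulr0 expR0 mulr1 => Wt.
have -> : V t = V t * expR (c * t) * expR (- c * t).
  by rewrite -mulrA -expRD mulNr addrN expR0 mulr1.
by rewrite ler_wpM2r // ltW // expR_gt0.
Qed.

Section RingNetwork.
Variables (R : realType) (n N : nat) (f : 'rV[R]_n -> 'rV[R]_n).
Variables (A : 'I_N -> 'I_N -> 'M[R]_n) (lam : R).

Lemma ring_coupling_le0 (E : 'I_N -> 'rV[R]_n) :
  (forall i, schur_psd (A (ordS i) i) (A i (ordS i)) \/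
             schur_psd (A i (ordS i)) (A (ordS i) i)) ->
  \sum_i (bil (A (ordS i) i) (E i) (E (ordS i) - E i)
          + bil (A (ord_pred i) i) (E i) (E (ord_pred i) - E i)) <= 0.
Proof.
(* reindex the backward terms so that each edge [(i, i+1)] is collected *)
move=> edge_ok; rewrite big_split /=.
rewrite [X in _ + X](reindex_inj (can_inj (@ordSK N))) /=.
under [X in _ + X]eq_bigr do rewrite ordSK.
rewrite -big_split /=; apply: sumr_le0 => i _.
set u := E i; set w := E (ordS i).
rewrite !bilDr !bilNr.
case: (edge_ok i) => [XY|YX].
  have := schur_psd_qform_ge0 u (- w) XY.
  by rewrite !qform_bil bilD bil_tr !bilNl !bilNr opprK; lra.
have := schur_psd_qform_ge0 (- w) u YX.
by rewrite !qform_bil bilD bil_tr !bilNl !bilNr opprK; lra.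
Qed.

Variable x : 'I_N -> R -> 'rV[R]_n.

Let node_field i t := f (x i t) + (x (ordS i) t - x i t) *m (A (ordS i) i)^T
                           + (x (ord_pred i) t - x i t) *m (A (ord_pred i) i)^T.
Let mean t := N%:R^-1 *: \sum_i x i t.
Let mean_field t := N%:R^-1 *: \sum_i node_field i t.
Let dev i t := x i t - mean t.
Let disagreement t := \sum_i dot (dev i t) (dev i t).

Hypothesis N_gt0 : (0 < N)%N.
Hypothesis x_continuous : forall i, {within `[0, +oo[, continuous (x i)}.
Hypothesis x_derive : forall i (t : R), 0 < t -> is_derive t 1 (x i) (node_field i t).

Lemma sum_dev (t : R) : \sum_i dev i t = 0.
Proof.
rewrite sumrB /mean sumr_const card_ord -scaler_nat scalerA divff ?scale1r ?subrr //.
by rewrite pnatr_eq0 -lt0n.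
Qed.

Lemma is_derive_dev i (t : R) : 0 < t -> is_derive t 1 (dev i) (node_field i t - mean_field t).
Proof.
move=> t0; apply: is_deriveB; first exact: x_derive.
have -> : mean = N%:R^-1 \*: \sum_i x i by apply/funext => s; rewrite /mean /= fct_sumE.
by apply: is_deriveZ; apply: is_derive_sum => j; exact: x_derive.
Qed.

Lemma is_derive_disagreement (t : R) : 0 < t ->
  is_derive t 1 disagreement (\sum_i 2 * dot (dev i t) (node_field i t - mean_field t)).
Proof.
move=> t0.
have -> : disagreement = \sum_i (fun s => dot (dev i s) (dev i s)).
  by apply/funext => s; rewrite /disagreement fct_sumE.
by apply: is_derive_sum => i; exact: is_derive_dot_self (is_derive_dev i t0).
Qed.

Lemma disagreement_continuous : {within `[0, +oo[, continuous disagreement}.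
Proof.
pose Rp := subspace (`[0, +oo[%classic : set R).
have entry_cont i j : {within `[0, +oo[, continuous (fun s => x i s 0 j)}.
  move=> t; apply: (@continuous_comp _ _ _ (from_subspace _ (x i)) (fun M => M 0 j) t);
    [exact: x_continuous | exact: coord_continuous].
have dev_cont i j : {within `[0, +oo[, continuous (fun s => dev i s 0 j)}.
  have -> : (fun s => dev i s 0 j) = (fun s => x i s 0 j - N%:R^-1 * \sum_k x k s 0 j).
    by apply/funext => s; rewrite /dev /mean !mxE summxE.
  move=> t; apply: cvgB; first exact: entry_cont.
  apply: cvgM; first exact: cvg_cst.
  by apply: (@continuous_sum _ Rp _ N (fun k s => x k s 0 j)) => k; exact: entry_cont.
move=> t; apply: (@continuous_sum _ Rp _ N (fun i s => dot (dev i s) (dev i s))) => i.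
apply: (@continuous_sum _ Rp _ n (fun j s => dev i s 0 j * dev i s 0 j)) => j.
by apply: cvgM; exact: dev_cont.
Qed.

Hypothesis f_contracting :
  forall u v, dot (u - v) (f u - f v) <= - lam * dot (u - v) (u - v).
Hypothesis edge_ok : forall i, schur_psd (A (ordS i) i) (A i (ordS i)) \/
                               schur_psd (A i (ordS i)) (A (ordS i) i).
Hypothesis lam_gt0 : 0 < lam.

Lemma derive_disagreement_le (t : R) :
  \sum_i 2 * dot (dev i t) (node_field i t - mean_field t) <= - (2 * lam) * disagreement t.
Proof.
have diff_dev i j : x j t - x i t = dev j t - dev i t by rewrite /dev opprB addrA subrK.
have split_terms i : dot (dev i t) (node_field i t - mean_field t) =
    dot (dev i t) (f (x i t) - f (mean t))
    + (bil (A (ordS i) i) (dev i t) (dev (ordS i) t - dev i t)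
       + bil (A (ord_pred i) i) (dev i t) (dev (ord_pred i) t - dev i t))
    + (dot (dev i t) (f (mean t)) - dot (dev i t) (mean_field t)).
  by rewrite /node_field !dotBr !dotDr !dot_mulmx_tr !diff_dev; lra.
rewrite -mulr_sumr (eq_bigr _ (fun i _ => split_terms i)) big_split /= big_split /=.
have mean_terms : \sum_i (dot (dev i t) (f (mean t)) - dot (dev i t) (mean_field t)) = 0.
  by rewrite sumrB !dot_suml sum_dev !dot0l subrr.
have intrinsic : \sum_i dot (dev i t) (f (x i t) - f (mean t)) <= - lam * disagreement t.
  by rewrite /disagreement mulr_sumr; apply: ler_sum => i _; exact: f_contracting.
have := ring_coupling_le0 (fun i => dev i t) edge_ok.
by rewrite mean_terms; lra.
Qed.

Lemma ring_synchronization : exists c k : R, 0 < k /\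
  forall t : R, 0 <= t -> forall i j, `|x i t - x j t| <= c * expR (- k * t).
Proof.
have V_decay := exp_decay_of_derive_le disagreement_continuous is_derive_disagreement
  (fun t _ => derive_disagreement_le t).
have V00 : 0 <= disagreement 0 by apply: sumr_ge0 => i _; exact: dot_ge0.
exists (2 * Num.sqrt (disagreement 0)), lam; split => // t t0 i j.
have dev_le k : `|dev k t| <= Num.sqrt (disagreement 0) * expR (- lam * t).
  apply: le_trans (normr_le_sqrt_dot _) _.
  have dev_sq : dot (dev k t) (dev k t) <= disagreement 0 * expR (- (2 * lam) * t).
    apply: le_trans (V_decay t t0); rewrite /disagreement (bigD1 k) //= lerDl.
    by apply: sumr_ge0 => l _; exact: dot_ge0.
  apply: le_trans (ler_wsqrtr dev_sq) _.
  have -> : expR (- (2 * lam) * t) = expR (- lam * t) ^+ 2.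
    by rewrite expr2 -expRD; congr expR; lra.
  by rewrite sqrtrM // sqrtr_sqr ger0_norm // ltW // expR_gt0.
have -> : x i t - x j t = dev i t - dev j t by rewrite /dev opprB addrA subrK.
by apply: le_trans (ler_normB _ _) _; have := dev_le i; have := dev_le j; lra.
Qed.

End RingNetwork.

Theorem theorem3p10 (R : realType) (n N : nat) (f : 'rV[R]_n -> 'rV[R]_n)
  (A : 'I_N -> 'I_N -> 'M[R]_n) :
  (3 <= N)%N ->
  smooth f ->
  (exists lambda : R, 0 < lambda /\
     forall z, loewner_le (symp (Jf f z)) (- lambda *: 1%:M)) ->
  (forall i : 'I_N,
     (pd (symp (A (ordS i) i)) /\
      psd (symp (A i (ordS i)) -
           4^-1 *: (A i (ordS i) + (A (ordS i) i)^T) *m invmx (symp (A (ordS i) i))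
                   *m (A (ordS i) i + (A i (ordS i))^T)))
     \/
     (pd (symp (A i (ordS i))) /\
      psd (symp (A (ordS i) i) -
           4^-1 *: (A (ordS i) i + (A i (ordS i))^T) *m invmx (symp (A i (ordS i)))
                   *m (A i (ordS i) + (A (ordS i) i)^T)))) ->
  forall x : 'I_N -> R -> 'rV[R]_n,
    (forall i, {within `[0, +oo[, continuous (x i)}) ->
    (forall i (t : R), 0 < t ->
       is_derive t 1 (x i)
         (f (x i t) + (x (ordS i) t - x i t) *m (A (ordS i) i)^T
                    + (x (ord_pred i) t - x i t) *m (A (ord_pred i) i)^T)) ->
    exists (c k : R), 0 < k /\
      forall (t : R), 0 <= t -> forall i j : 'I_N,
        `|x i t - x j t| <= c * expR (- k * t).
Proof.
move=> N3 f_smooth [lam [lam0 Jf_le]] edge_ok x x_cont x_der.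
have f_der x0 v : derivable f x0 v := (f_smooth [::]).2 v x0.
have f_partials v : continuous ('D_v f) := (f_smooth [:: v]).1.
have N0 : (0 < N)%N by apply: leq_trans N3.
exact: ring_synchronization N0 x_cont x_der
  (contracting f_der f_partials Jf_le) edge_ok lam0.
Qed.
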